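(* Let $X$ be an infinite compact metrizable space and $h\colon X\to X$ a minimal homeomorphism. Let $Y\subset X$ be closed with $\mathrm{int}(Y)\neq\varnothing$ and $\partial Y$ topologically $h$-small. For $y\in Y$ let $r(y)=\min\{m\ge1: h^m(y)\in Y\}$; the function $r$ takes only finitely many values, say $n(0)<n(1)<\cdots<n(l)$. For $0\le k\le l$ let $Y_k=\overline{\{y\in Y: r(y)=n(k)\}}$. Then $\partial(h^j(Y_k))$ is thin for all $0\le k\le l$ and $0\le j\le n(k)-1$.
   Context: $\partial A$ is the boundary of $A$. A closed set $F\subset X$ is topologically $h$-small if there is $m\in\mathbb{Z}_{+}$ such that whenever $d(0),\dots,d(m)$ are $m+1$ distinct integers, $h^{d(0)}(F)\cap\cdots\cap h^{d(m)}(F)=\varnothing$. For $F\subset X$ closed and $U\subset X$ open, write $F\prec U$ if there exist $M\in\mathbb{N}$, open sets $U_0,\dots,U_M\subset X$ and integers $d(0),\dots,d(M)$ such that $F\subset\bigcup_{j=0}^M U_j$, $h^{d(j)}(U_j)\subset U$ for all $j$, and the sets $h^{d(j)}(U_j)$ are pairwise disjoint. A closed set $F$ is thin if $F\prec U$ for every non-empty open $U\subset X$. *)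

From HB Require Import structures.
From mathcomp Require Import all_boot all_order all_algebra.
From mathcomp Require Import all_classical all_reals all_analysis.
Set Implicit Arguments. Unset Strict Implicit. Unset Printing Implicit Defensive.
Import Order.TTheory GRing.Theory Num.Theory.
Local Open Scope classical_set_scope.

Definition hpow {X : Type} (h g : X -> X) (d : int) : X -> X :=
  match d with
  | Posz n => iter n h
  | Negz n => iter n.+1 g
  end.

Definition homeo_with_inv {X : topologicalType} (h g : X -> X) : Prop :=
  continuous h /\ continuous g /\ cancel h g /\ cancel g h.

Definition minimal_homeo {X : topologicalType} (h : X -> X) : Prop :=
  forall Z : set X, closed Z -> h @` Z = Z -> Z = set0 \/ Z = setT.

Definition boundary {X : topologicalType} (A : set X) : set X :=
  closure A `\` interior A.

Definition top_small {X : topologicalType} (h g : X -> X) (F : set X) : Prop :=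
  closed F /\
  exists m : nat, forall d : 'I_m.+1 -> int, injective d ->
    \bigcap_(i in [set: 'I_m.+1]) (hpow h g (d i) @` F) = set0.

Definition prec {X : topologicalType} (h g : X -> X) (F U : set X) : Prop :=
  exists (M : nat) (Us : 'I_M.+1 -> set X) (d : 'I_M.+1 -> int),
    (forall j, open (Us j)) /\
    F `<=` \bigcup_(j in [set: 'I_M.+1]) Us j /\
    (forall j, hpow h g (d j) @` Us j `<=` U) /\
    (forall i j, i != j -> (hpow h g (d i) @` Us i) `&` (hpow h g (d j) @` Us j) = set0).

Definition thin {X : topologicalType} (h g : X -> X) (F : set X) : Prop :=
  closed F /\ forall U : set X, open U -> U !=set0 -> prec h g F U.

Definition first_return {X : Type} (h : X -> X) (Y : set X) (y : X) (n : nat) : Prop :=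
  (1 <= n)%N /\ Y (iter n h y) /\ (forall m, (1 <= m)%N -> (m < n)%N -> ~ Y (iter m h y)).

From HB Require Import structures.
From mathcomp Require Import all_boot all_order all_algebra.
From mathcomp Require Import all_classical all_reals all_analysis.
From mathcomp Require Import zify.
Import Order.TTheory GRing.Theory Num.Theory.
Local Open Scope classical_set_scope.

(* By minimality and compactness every point enters int Y within a bounded time,
   so the return time r is defined and bounded.  The closure of the level set
   E = {r = n} lies between the open set
     int Y ∩ h^-n (int Y) ∩ ⋂_{0<m<n} h^-m (X \ Y)
   and the closed set
     Y ∩ h^-n Y ∩ ⋂_{0<m<n} h^-m (closure (X \ Y)),
   whose difference lies in ⋃_{m<=n} h^-m (∂Y); hence ∂(h^j (closure E)) is
   covered by finitely many translates of ∂Y.  Translates and finite unions of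
   thin sets are thin, and a topologically small closed set F is thin by
   induction on its order.  Split the target open set into disjoint nonempty
   open sets U1, U2 (X has no isolated points) and let N bound the return time
   to U2.  The points of F returning to F within N steps lie in the sets
   F ∩ h^k F, of smaller order, and are packed into U1; the rest of F has a
   neighbourhood W disjoint from its first N iterates, so the pieces
   W ∩ h^-d U2 (d <= N) are carried by h^d disjointly into U2. *)

Section hpow_algebra.
Context {X : Type} {h g : X -> X} (hK : cancel h g) (gK : cancel g h).
Local Notation hp := (hpow h g).

Lemma hpowD1 (d : int) x : hp (d + 1)%R x = h (hp d x).
Proof.
case: d => [n|[|n]].
- by have -> : (Posz n + 1 = Posz n.+1)%R by rewrite -addn1 PoszD.
- by rewrite /= gK.
- have -> : (Negz n.+1 + 1 = Negz n)%R by rewrite !NegzE; lia.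
  by rewrite /= gK.
Qed.

Lemma hpowB1 (d : int) x : hp (d - 1)%R x = g (hp d x).
Proof. by rewrite -{2}(subrK 1%R d) hpowD1 hK. Qed.

Lemma hpowD (a b : int) x : hp (a + b)%R x = hp a (hp b x).
Proof.
case: a => n; elim: n => [|n IH].
- by rewrite add0r.
- have -> : (Posz n.+1 + b = (Posz n + b) + 1)%R by lia.
  by rewrite hpowD1 IH.
- have -> : (Negz 0 + b = b - 1)%R by rewrite NegzE; lia.
  by rewrite hpowB1.
- have -> : (Negz n.+1 + b = (Negz n + b) - 1)%R by rewrite !NegzE; lia.
  by rewrite hpowB1 IH.
Qed.

Lemma hpowNK (e : int) x : hp (- e)%R (hp e x) = x.
Proof. by rewrite -hpowD addNr. Qed.

Lemma hpowKN (e : int) x : hp e (hp (- e)%R x) = x.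
Proof. by rewrite -hpowD addrN. Qed.

Lemma image_hpow (e : int) (S : set X) : hp e @` S = hp (- e)%R @^-1` S.
Proof.
apply/seteqP; split => x /=; first by case=> y Sy <-; rewrite hpowNK.
by move=> Sx; exists (hp (- e)%R x) => //; rewrite hpowKN.
Qed.

Lemma image_hpowD (e : int) (S T : set X) : hp e @` (S `\` T) = hp e @` S `\` hp e @` T.
Proof. by rewrite !image_hpow. Qed.

Lemma image_hpow_preimage_iter (e : int) (m : nat) (S : set X) :
  hp e @` (iter m h @^-1` S) = hp (e - Posz m)%R @` S.
Proof.
rewrite !image_hpow; apply/seteqP; split => x /=;
  by rewrite -[iter m h _]/(hp (Posz m) _) -hpowD opprB addrC.
Qed.

End hpow_algebra.

Lemma continuous_iter {T : topologicalType} (f : T -> T) n :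
  continuous f -> continuous (iter n f).
Proof.
move=> fc; elim: n => [|n IH] x /=; first exact: cvg_id.
exact: continuous_comp (IH x) (fc _).
Qed.

Lemma closed_bigcap {T : topologicalType} (I : Type) (D : set I) (F : I -> set T) :
  (forall i, D i -> closed (F i)) -> closed (\bigcap_(i in D) F i).
Proof.
move=> cF; rewrite -[X in closed X]setCK setC_bigcap; apply: open_closedC.
by apply: bigcup_open => i Di; apply: closed_openC; exact: cF.
Qed.

Lemma open_bigcap {T : topologicalType} (I : choiceType) (D : set I) (F : I -> set T) :
  finite_set D -> (forall i, D i -> open (F i)) -> open (\bigcap_(i in D) F i).
Proof.
move=> fD oF; rewrite -[X in open X]setCK setC_bigcap; apply: closed_openC.
by apply: closed_bigcup => // i Di; apply: open_closedC; exact: oF.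
Qed.

Lemma closed_boundary {T : topologicalType} (A : set T) : closed (boundary A).
Proof.
rewrite /boundary setDE; apply: closedI; first exact: closed_closure.
exact/open_closedC/open_interior.
Qed.

Lemma boundary_sub_setD {T : topologicalType} (A C G : set T) :
  closed C -> open G -> G `<=` A -> A `<=` C -> boundary A `<=` C `\` G.
Proof.
move=> cC oG GA AC x [clx nix]; split.
- by rewrite (closure_id C).1 //; exact: closureS AC _ clx.
- by move: GA; rewrite open_subsetE // => GA /GA.
Qed.

Lemma compact_cover_bounded {T : topologicalType} (O : int -> set T) :
  compact [set: T] -> (forall e, open (O e)) -> (forall x, exists e, O e x) ->
  exists N : nat, forall x, exists e : int, (`|e| <= N)%N /\ O e x.
Proof.
move=> cT oO cov.
have [|N _ HN] := (compact_near_coveringP [set: T]).1 cT nat \oo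
  (fun N x => exists e : int, (`|e| <= N)%N /\ O e x).
  move=> x _; have [e Oe] := cov x.
  exists (O e, [set n | (`|e| <= n)%N]) => /=.
    by split; [exact: open_nbhs_nbhs | exists `|e|%N].
  by move=> [y n] [/= ? ?]; exists e.
by exists N => x; exact: HN N (leqnn _) x I.
Qed.

Lemma split_open {T : topologicalType} (U : set T) :
  hausdorff_space T -> (forall x : T, ~ open [set x]) -> open U -> U !=set0 ->
  exists U1 U2, [/\ open U1, open U2, U1 !=set0 & U2 !=set0] /\
                [/\ U1 `<=` U, U2 `<=` U & U1 `&` U2 = set0].
Proof.
move=> hT noiso oU [u Uu].
have [v Uv vu] : exists2 v, U v & v != u.
  apply: contrapT => nv; apply: (noiso u); suff -> : [set u] = U by [].
  apply/seteqP; split => [y ->//|y Uy]; apply: contrapT => yu.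
  by apply: nv; exists y => //; exact/eqP.
move: hT; rewrite open_hausdorff => /(_ v u vu) [[A B]] /= [Av Bu] [oA oB /eqP AB0].
rewrite inE in Av; rewrite inE in Bu.
exists (U `&` A), (U `&` B); split; split.
- exact: openI.
- exact: openI.
- by exists v.
- by exists u.
- exact: subIsetl.
- exact: subIsetl.
- by rewrite setIACA AB0 setI0.
Qed.

Lemma first_return_exists {T : Type} {f : T -> T} {Y : set T} {y : T} {m : nat} :
  (0 < m)%N -> Y (iter m f y) -> exists2 n, (n <= m)%N & first_return f Y y n.
Proof.
move=> m0 Ym; have ex : exists n, (0 < n)%N && `[< Y (iter n f y) >].
  by exists m; rewrite m0; apply/asboolP.
case: (ex_minnP ex) => n /andP[n0 /asboolP Yn] nmin.
exists n; first by apply: nmin; rewrite m0; apply/asboolP.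
split => //; split => // k k0 kn Yk.
by have := nmin k; rewrite k0 /=; move/asboolP: Yk => -> /(_ isT); lia.
Qed.

Lemma first_return_unique {T : Type} {f : T -> T} {Y : set T} {y : T} {n1 n2 : nat} :
  first_return f Y y n1 -> first_return f Y y n2 -> n1 = n2.
Proof.
move=> [n10 [Y1 min1]] [n20 [Y2 min2]].
by case: (ltngtP n1 n2) => // n12; [case: (min2 n1) | case: (min1 n2)].
Qed.

Section level_sets.
Context {X : topologicalType} (h : X -> X) (hc : continuous h) (Y : set X) (n : nat).

Definition return_hull := Y `&` iter n h @^-1` Y `&`
  \bigcap_(m in [set m | (0 < m < n)%N]) iter m h @^-1` closure (~` Y).

Definition return_core := Y° `&` iter n h @^-1` Y° `&`
  \bigcap_(m in [set m | (0 < m < n)%N]) iter m h @^-1` (~` Y).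

Lemma closed_return_hull : closed Y -> closed return_hull.
Proof.
have cpre m S : closed S -> closed (iter m h @^-1` S).
  by move=> cS; apply: (continuous_closedP _).1 (continuous_iter _ m hc) _ cS.
move=> cY; apply: closedI; first exact: closedI cY (cpre _ _ cY).
by apply: closed_bigcap => m _; apply: cpre; exact: closed_closure.
Qed.

Lemma open_return_core : closed Y -> open return_core.
Proof.
have opre m S : open S -> open (iter m h @^-1` S).
  by move=> oS; apply: (continuousP _).1 (continuous_iter _ m hc) _ oS.
move=> cY; apply: openI.
  exact: openI (@open_interior _ Y) (opre _ _ (@open_interior _ Y)).
apply: open_bigcap => [|m _].
  by apply: sub_finite_set (finite_II n) => m /andP[].
by apply: opre; exact: closed_openC.
Qed.

Lemma first_return_sub_hull : [set y | Y y /\ first_return h Y y n] `<=` return_hull.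
Proof.
move=> y [Yy [_ [Yn nY]]]; split; first by split.
by move=> m /andP[m0 mn]; apply: subset_closure; exact: nY.
Qed.

Lemma return_core_sub : (0 < n)%N -> return_core `<=` [set y | Y y /\ first_return h Y y n].
Proof.
move=> n0 y [[/interior_subset Yy /interior_subset Yn] nY].
by do 3!split => //; move=> m m0 mn; apply: nY; rewrite /= m0.
Qed.

Lemma return_hull_core :
  return_hull `\` return_core `<=` \bigcup_(m in `I_n.+1) iter m h @^-1` boundary Y.
Proof.
have bdY w : Y w -> ~ Y° w -> boundary Y w by move=> Yw; split => //; exact: subset_closure.
move=> z [[[Yz Ynz] clY] nG].
have [iz|] := pselect (Y° z); last by exists 0%N => //; exact: bdY.
have [inz|] := pselect (Y° (iter n h z)); last by exists n => //=; exact: bdY.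
have [m /andP[m0 mn] Ym] : exists2 m, (0 < m < n)%N & Y (iter m h z).
  apply: contrapT => nY; apply: nG; split; first by split.
  by move=> m mr Ym; apply: nY; exists m.
exists m; first by rewrite /=; lia.
have clYm : closure (~` Y) (iter m h z) by apply: clY; rewrite /= m0.
apply: bdY => //; rewrite -(setCK Y) interiorC.
exact: (fun nclYm => nclYm clYm).
Qed.

End level_sets.

Section minimal_homeomorphism.
Context {X : topologicalType} (h g : X -> X) (hg : homeo_with_inv h g).
Local Notation hp := (hpow h g).

Let hK : cancel h g. Proof. by case: hg => _ [_ []]. Qed.
Let gK : cancel g h. Proof. by case: hg => _ [_ []]. Qed.

Lemma continuous_hpow e : continuous (hp e).
Proof. by case: hg => hc [gc _]; case: e => n; exact: continuous_iter. Qed.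

Lemma open_preimage_hpow e S : open S -> open (hp e @^-1` S).
Proof. exact: (continuousP _).1 (continuous_hpow e) S. Qed.

Lemma closed_preimage_hpow e S : closed S -> closed (hp e @^-1` S).
Proof. exact: (continuous_closedP _).1 (continuous_hpow e) S. Qed.

Lemma open_image_hpow e S : open S -> open (hp e @` S).
Proof. by rewrite (image_hpow hK gK); exact: open_preimage_hpow. Qed.

Lemma closed_image_hpow e S : closed S -> closed (hp e @` S).
Proof. by rewrite (image_hpow hK gK); exact: closed_preimage_hpow. Qed.

Hypotheses (hX : hausdorff_space X) (cX : compact [set: X]).
Hypotheses (mh : minimal_homeo h) (infX : ~ finite_set [set: X]).

(* The points whose orbit misses V form a closed h-invariant set, not all of X. *)
Lemma minimal_orbit_meets (V : set X) : open V -> V !=set0 ->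
  forall x, exists e : int, V (hp e x).
Proof.
move=> oV [v Vv].
pose W := \bigcup_(e in [set: int]) (hp e @^-1` V).
have cW : closed (~` W).
  by apply: open_closedC; apply: bigcup_open => e _; exact: open_preimage_hpow.
have hW : h @` (~` W) = ~` W.
  apply/seteqP; split => x.
  - case=> y nWy <- [e _ Ve]; apply: nWy; exists (e + 1)%R => //.
    by rewrite /= (hpowD hK gK).
  - move=> nWx; exists (g x); last by rewrite gK.
    move=> [e _ Ve]; apply: nWx; exists (e - 1)%R => //.
    by rewrite /= (hpowD hK gK).
case: (mh _ cW hW) => [W0|WT] x.
- apply: contrapT => nx; have : (~` W) x by move=> [e _ Ve]; apply: nx; exists e.
  by rewrite W0.
- have : (~` W) v by rewrite WT.
  by case; exists 0%R.
Qed.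

Lemma minimal_bounded_orbit_meets (V : set X) : open V -> V !=set0 ->
  exists N : nat, forall x, exists e : int, (`|e| <= N)%N /\ V (hp e x).
Proof.
move=> oV V0; apply: (compact_cover_bounded (fun e => hp e @^-1` V)) => //.
  by move=> e; exact: open_preimage_hpow.
exact: minimal_orbit_meets.
Qed.

Lemma minimal_bounded_return (V : set X) : open V -> V !=set0 ->
  exists N : nat, forall x, exists2 d : nat, (d <= N)%N & V (iter d h x).
Proof.
move=> oV V0; have [N HN] := minimal_bounded_orbit_meets _ oV V0.
exists (N + N)%N => x; have [e [eN Ve]] := HN (iter N h x).
exists (absz (e + Posz N)%R); first lia.
have -> : iter (absz (e + Posz N)%R) h x = hp (e + Posz N)%R x.
  by rewrite -[LHS]/(hp (Posz _) x); congr (hp _ x); lia.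
by rewrite (hpowD hK gK).
Qed.

(* An isolated point would have a finite orbit covering X. *)
Lemma minimal_no_isolated (x : X) : ~ open [set x].
Proof.
move=> ox; have [N HN] := minimal_bounded_orbit_meets _ ox (ex_intro _ x erefl).
apply: infX; apply: sub_finite_set (finite_image
  (fun k : nat => hp (- (Posz k - Posz N))%R x) (finite_II (N + N).+1)).
move=> y _; have [e [eN ye]] := HN y.
exists (absz (e + Posz N)%R); first by rewrite /=; lia.
have -> : (Posz (absz (e + Posz N)%R) - Posz N = e)%R by lia.
by rewrite -ye (hpowNK hK gK).
Qed.

Definition packing (U : set X) {I : finType} (W : I -> set X) (d : I -> int) :=
  [/\ forall i, open (W i), forall i, hp (d i) @` W i `<=` U &
      forall i j, i != j -> hp (d i) @` W i `&` hp (d j) @` W j = set0].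

(* [prec] indexed by an arbitrary finite type. *)
Definition fprec (F U : set X) := exists (I : finType) (W : I -> set X) (d : I -> int),
  packing U W d /\ F `<=` \bigcup_(i in [set: I]) W i.

Definition fthin (F : set X) := forall U, open U -> U !=set0 -> fprec F U.

(* Reindex by 'I_#|I|.+1, padding with one empty open set. *)
Lemma fprec_prec F U : fprec F U -> prec h g F U.
Proof.
case=> I [W [d [[oW WU Wdisj] FW]]].
pose n := #|I|.
pose W' (j : 'I_n.+1) := if (insub (val j) : option 'I_n) is Some k then W (enum_val k) else set0.
pose d' (j : 'I_n.+1) := if (insub (val j) : option 'I_n) is Some k then d (enum_val k) else 0%R.
exists n, W', d'; split; [|split; [|split]].
- by move=> j; rewrite /W'; case: insubP => [k _ _|_]; [exact: oW | exact: open0].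
- move=> x /FW [i _ Wix]; exists (widen_ord (leqnSn _) (enum_rank i)) => //.
  rewrite /W' /=; case: insubP => [k _ kv|]; last by rewrite ltn_ord.
  by rewrite (_ : k = enum_rank i) ?enum_rankK //; exact: val_inj.
- move=> j; rewrite /W' /d'; case: insubP => [k _ _|_ y [z //]].
  exact: WU.
- move=> i j ij; rewrite /W' /d'.
  case: insubP => [k _ ki|_]; last by rewrite image_set0 set0I.
  case: insubP => [k' _ kj|_]; last by rewrite image_set0 setI0.
  apply: Wdisj; apply: contra ij => /eqP /enum_val_inj kk.
  by rewrite -(inj_eq val_inj) -ki -kj kk.
Qed.

Lemma fprec0 U : fprec set0 U.
Proof.
exists void, (fun v : void => match v with end), (fun v : void => match v with end).
by split => //; split; case.
Qed.

Lemma fprecS F F' U U' : F' `<=` F -> U `<=` U' -> fprec F U -> fprec F' U'.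
Proof.
move=> F'F UU' [I [W [d [[oW WU Wdisj] FW]]]]; exists I, W, d; split.
  by split => // i; exact: subset_trans (WU i) UU'.
exact: subset_trans FW.
Qed.

Lemma fthinS F F' : F' `<=` F -> fthin F -> fthin F'.
Proof. by move=> F'F tF U oU U0; exact: fprecS F'F _ (tF U oU U0). Qed.

Lemma fthin0 : fthin set0.
Proof. by move=> U _ _; exact: fprec0. Qed.

Lemma fprecU {F1 F2 U1 U2 : set X} : U1 `&` U2 = set0 ->
  fprec F1 U1 -> fprec F2 U2 -> fprec (F1 `|` F2) (U1 `|` U2).
Proof.
move=> U12 [I1 [W1 [d1 [[oW1 WU1 Wdisj1] FW1]]]] [I2 [W2 [d2 [[oW2 WU2 Wdisj2] FW2]]]].
pose W i := match i with inl a => W1 a | inr b => W2 b end.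
pose d i := match i with inl a => d1 a | inr b => d2 b end.
have sep y : (U1 `&` U2) y -> False by rewrite U12.
exists (I1 + I2)%type, W, d; split; [split|].
- by case.
- by case=> a y Hy; [left; exact: WU1 Hy | right; exact: WU2 Hy].
- case=> a [] b ab; apply/seteqP; split => // y [y1 y2].
  + have ab' : a != b by apply: contra ab => /eqP ->.
    by rewrite -(Wdisj1 _ _ ab').
  + by apply: sep; split; [exact: WU1 y1 | exact: WU2 y2].
  + by apply: sep; split; [exact: WU1 y2 | exact: WU2 y1].
  + have ab' : a != b by apply: contra ab => /eqP ->.
    by rewrite -(Wdisj2 _ _ ab').
- by move=> x [/FW1 [i _ Wi]|/FW2 [i _ Wi]]; [exists (inl i) | exists (inr i)].
Qed.

Lemma split_open_minimal (U : set X) : open U -> U !=set0 ->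
  exists U1 U2, [/\ open U1, open U2, U1 !=set0 & U2 !=set0] /\
                [/\ U1 `<=` U, U2 `<=` U & U1 `&` U2 = set0].
Proof. by apply: split_open => // x; exact: minimal_no_isolated. Qed.

Lemma fthinU F1 F2 : fthin F1 -> fthin F2 -> fthin (F1 `|` F2).
Proof.
move=> t1 t2 U oU U0.
have [U1 [U2 [[oU1 oU2 U10 U20] [U1U U2U U12]]]] := split_open_minimal _ oU U0.
have := fprecU U12 (t1 _ oU1 U10) (t2 _ oU2 U20).
by apply: fprecS => // y [/U1U|/U2U].
Qed.

Lemma fthin_bigcup_lt (F : nat -> set X) n :
  (forall m, (m < n)%N -> fthin (F m)) -> fthin (\bigcup_(m in `I_n) F m).
Proof.
elim: n => [|n IH] tF.
  by apply: fthinS _ fthin0 => x [m /=].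
have tFn : fthin (\bigcup_(m in `I_n) F m `|` F n).
  by apply: fthinU; [apply: IH => m mn; apply: tF; lia | exact: tF].
apply: fthinS _ tFn => x [m /= mn Fmx].
have [<-|/eqP mn'] := eqVneq m n; first by right.
by left; exists m => //=; lia.
Qed.

Lemma fthin_hpow e F : fthin F -> fthin (hp e @` F).
Proof.
move=> tF U oU U0; have [I [W [d [[oW WU Wdisj] FW]]]] := tF U oU U0.
have E i : hp (d i - e)%R @` (hp e @` W i) = hp (d i) @` W i.
  by rewrite image_comp; apply: eq_imagel => y _ /=; rewrite -(hpowD hK gK) subrK.
exists I, (fun i => hp e @` W i), (fun i => d i - e)%R; split; [split|].
- by move=> i; exact: open_image_hpow.
- by move=> i; rewrite E.
- by move=> i j ij; rewrite !E; exact: Wdisj.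
- by move=> x [y /FW [i _ Wiy] <-]; exists i => //; exists y.
Qed.

Lemma separate_iterate {F : set X} {k : nat} : closed F -> (forall b, F b -> ~ F (iter k h b)) ->
  exists W, [/\ open W, F `<=` W & forall b, W b -> ~ W (iter k h b)].
Proof.
move=> cF sF; pose K := hp (Posz k) @` F.
have nK : set_nbhs F (~` K).
  apply/set_nbhsP; exists (~` K); split => //.
    exact/closed_openC/closed_image_hpow.
  by move=> b Fb [c Fc cb]; apply: (sF c Fc); rewrite [iter _ _ _]cb.
have [C nC clC] := compact_normal hX cX cF nK.
have [C' [oC' FC' C'C]] := (set_nbhsP _ _).1 nC.
exists (C' `&` hp (Posz k) @^-1` (~` closure C')); split.
- by apply: openI => //; apply: open_preimage_hpow; exact/closed_openC/closed_closure.
- move=> b Fb; split; first exact: FC'.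
  by move=> /(closureS C'C) /clC; apply; exists b.
- by move=> b [_ nb] [C'k _]; apply: nb; exact: subset_closure.
Qed.

Lemma separate_iterates {F : set X} {N : nat} : closed F ->
  (forall k, (0 < k <= N)%N -> forall b, F b -> ~ F (iter k h b)) ->
  exists W, [/\ open W, F `<=` W &
    forall k, (0 < k <= N)%N -> forall b, W b -> ~ W (iter k h b)].
Proof.
move=> cF; elim: N => [|N IH] sF.
  by exists setT; split => // [|k]; [exact: openT | lia].
have [W1 [oW1 FW1 s1]] : exists W, [/\ open W, F `<=` W &
    forall k, (0 < k <= N)%N -> forall b, W b -> ~ W (iter k h b)].
  by apply: IH => k kN; apply: sF; lia.
have [W2 [oW2 FW2 s2]] := separate_iterate cF (sF N.+1 (leqnn _)).
exists (W1 `&` W2); split; first exact: openI.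
  by move=> x Fx; split; [exact: FW1 | exact: FW2].
move=> k kN b [W1b W2b] [W1k W2k].
have [ek|kN1] := eqVneq k N.+1; first by subst k; exact: s2 W2b W2k.
by apply: (s1 k _ b W1b W1k); lia.
Qed.

(* Distinct iterates iter i h a = iter j h b with i < j would put b and its
   (j - i)-th iterate both in W. *)
Lemma fprec_separated {W F V : set X} {N : nat} : open W -> F `<=` W -> open V ->
  (forall x, exists2 d : nat, (d <= N)%N & V (iter d h x)) ->
  (forall k, (0 < k <= N)%N -> forall b, W b -> ~ W (iter k h b)) ->
  fprec F V.
Proof.
move=> oW FW oV HV Wsep.
have iterW (i j : 'I_N.+1) a b : (i < j)%N -> W a -> W b -> iter i h a <> iter j h b.
  move=> lij Wa Wb e; apply: (Wsep (j - i)%N _ b Wb); first by have := ltn_ord j; lia.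
  suff <- : a = iter (j - i) h b by [].
  apply: (can_inj (hpowNK hK gK (Posz i))).
  by rewrite /= e -iterD subnKC // ltnW.
exists 'I_N.+1, (fun d : 'I_N.+1 => W `&` hp (Posz d) @^-1` V), (fun d : 'I_N.+1 => Posz d).
split; [split|].
- by move=> d; apply: openI => //; exact: open_preimage_hpow.
- by move=> d y [z [_ Vz] <-].
- move=> i j ij; apply/seteqP; split => // y [[a [Wa _] ya] [b [Wb _] yb]].
  rewrite -yb in ya; case: (ltngtP i j) => [lij|lji|eij].
  + exact: iterW lij Wa Wb ya.
  + exact: iterW lji Wb Wa (esym ya).
  + by move: ij; rewrite (val_inj eij) eqxx.
- move=> x Fx; have [d dN Vd] := HV x.
  by exists (Ordinal (dN : (d < N.+1)%N)) => //; split; [exact: FW | exact: Vd].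
Qed.

Lemma fthin_returns F : closed F ->
  (forall k, (0 < k)%N -> fthin (F `&` hp (Posz k) @` F)) -> fthin F.
Proof.
move=> cF tFk U oU U0.
have [U1 [U2 [[oU1 oU2 U10 U20] [U1U U2U U12]]]] := split_open_minimal _ oU U0.
have [N HN] := minimal_bounded_return _ oU2 U20.
have [I [W [d [pW BW]]]] : fprec (\bigcup_(k in `I_N) (F `&` hp (Posz k.+1) @` F)) U1.
  by apply: fthin_bigcup_lt oU1 U10 => k _; exact: tFk.
pose F' := F `\` \bigcup_(i in [set: I]) W i.
have cF' : closed F'.
  rewrite /F' setDE; apply: closedI cF _; apply: open_closedC.
  by apply: bigcup_open => i _; case: pW.
have F'sep k : (0 < k <= N)%N -> forall b, F' b -> ~ F' (iter k h b).
  move=> kN b [Fb _] [Fk []]; apply: BW; exists k.-1; first by rewrite /=; lia.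
  by split => //; exists b; rewrite ?prednK //; lia.
have [W' [oW' F'W' W'sep]] := separate_iterates cF' F'sep.
have pW1 : fprec (\bigcup_(i in [set: I]) W i) U1 by exists I, W, d; split.
have := fprecU U12 pW1 (fprec_separated oW' F'W' oU2 HN W'sep).
apply: fprecS => [x Fx|y [/U1U|/U2U] //].
by have [|] := pselect ((\bigcup_(i in [set: I]) W i) x); [left | right].
Qed.

Definition disjoint_translates (m : nat) (F : set X) :=
  forall d : 'I_m.+1 -> int, injective d ->
    \bigcap_(i in [set: 'I_m.+1]) (hp (d i) @` F) = set0.

(* m + 1 distinct translates of F `&` h^k F yield m + 2 distinct translates of
   F: add the exponent (max d) + k to the family d. *)
Lemma disjoint_translatesI m F k : (0 < k)%N -> disjoint_translates m.+1 F ->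
  disjoint_translates m (F `&` hp (Posz k) @` F).
Proof.
move=> k0 dF d dI; apply/seteqP; split => // x Fx.
have [i0 _ dmax] := @arg_maxP _ _ _ (ord0 : 'I_m.+1) xpredT d isT.
pose d' j := if unlift ord_max j is Some j' then d j' else (d i0 + Posz k)%R.
have d'I : injective d'.
  move=> a b; rewrite /d'.
  case: (unliftP ord_max a) => [a' ->|->]; case: (unliftP ord_max b) => [b' ->|->] //.
  - by move=> /dI ->.
  - by move=> e; have := dmax a' isT; rewrite e; lia.
  - by move=> e; have := dmax b' isT; rewrite -e; lia.
rewrite -(dF d' d'I) => j _; rewrite /d'; case: (unliftP ord_max j) => [j' _|_].
- by have [y [Fy _] <-] := Fx j' I; exists y.
- have [y [_ [z Fz <-]] <-] := Fx i0 I; exists z => //.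
  by rewrite (hpowD hK gK).
Qed.

Lemma disjoint_translates_fthin m F : closed F -> disjoint_translates m F -> fthin F.
Proof.
elim: m F => [|m IH] F cF dF.
  have inj0 : injective (fun _ : 'I_1 => 0%R : int) by move=> a b _; rewrite !ord1.
  apply: fthinS _ fthin0 => x Fx; rewrite -(dF _ inj0) => i _.
  by exists x.
apply: (fthin_returns _ cF) => k k0.
apply: IH; first exact: closedI cF (closed_image_hpow _ _ cF).
exact: disjoint_translatesI.
Qed.

Lemma top_small_fthin F : top_small h g F -> fthin F.
Proof. by case=> cF [m dF]; exact: disjoint_translates_fthin _ _ cF dF. Qed.

Lemma first_return_bounded (Y : set X) : Y° !=set0 ->
  exists N, forall y, exists2 n, (n <= N)%N & first_return h Y y n.
Proof.
move=> iY; have [N HN] := minimal_bounded_return _ (@open_interior _ Y) iY.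
exists N.+1 => y; have [d dN /interior_subset Yd] := HN (h y).
have Yd1 : Y (iter d.+1 h y) by rewrite iterSr.
have [n nd fr] := first_return_exists (ltn0Sn d) Yd1.
by exists n => //; exact: leq_trans nd _.
Qed.

Lemma boundary_level_set (Y : set X) n j : closed Y -> (0 < n)%N ->
  boundary (iter j h @` closure [set y | Y y /\ first_return h Y y n]) `<=`
  \bigcup_(m in `I_n.+1) hp (Posz j - Posz m)%R @` boundary Y.
Proof.
move=> cY n0; set E := [set y | _].
have hc : continuous h by case: hg.
have cH := closed_return_hull h hc Y n cY.
have clEH : closure E `<=` return_hull h Y n.
  by rewrite [X in _ `<=` X](closure_id _).1 //; exact/closureS/first_return_sub_hull.
have cG := open_return_core h hc Y n cY.
apply: subset_trans (boundary_sub_setD _ _ _ (closed_image_hpow (Posz j) _ cH)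
  (open_image_hpow (Posz j) _ cG) _ _) _.
- move=> _ [z Gz <-]; exists z => //; apply: subset_closure.
  exact: return_core_sub.
- by move=> _ [z Ez <-]; exists z => //; exact: clEH.
- rewrite -(image_hpowD hK gK) => _ [z /return_hull_core [m mn bm] <-].
  by exists m => //; rewrite -(image_hpow_preimage_iter hK gK); exists z.
Qed.

End minimal_homeomorphism.

Theorem lemma5p5 (R : realType) (X : pseudoMetricType R) (h g : X -> X) (Y : set X) :
  hausdorff_space X -> compact [set: X] -> ~ finite_set [set: X] ->
  homeo_with_inv h g -> minimal_homeo h ->
  closed Y -> interior Y !=set0 -> top_small h g (boundary Y) ->
  (forall y, Y y -> exists n, first_return h Y y n) /\
  finite_set [set n | exists2 y, Y y & first_return h Y y n] /\
  (forall n : nat, (exists2 y, Y y & first_return h Y y n) ->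
     forall j : nat, (j < n)%N ->
       thin h g (boundary (iter j h @` closure [set y | Y y /\ first_return h Y y n]))).
Proof.
move=> hX cX infX hg mh cY iY tY.
have [N retN] := first_return_bounded _ _ hg cX mh _ iY.
split; [|split].
- by move=> y _; have [n _ fr] := retN y; exists n.
- apply: sub_finite_set (finite_II N.+1) => n [y _ fr] /=.
  by have [n' n'N fr'] := retN y; rewrite (first_return_unique fr fr') ltnS.
- move=> n [y _ [n0 _]] j _; split; first exact: closed_boundary.
  have thin_translates :
      fthin h g (\bigcup_(m in `I_n.+1) hpow h g (Posz j - Posz m)%R @` boundary Y).
    apply: (fthin_bigcup_lt _ _ hg hX cX mh infX) => m _.
    exact/(fthin_hpow _ _ hg)/(top_small_fthin _ _ hg hX cX mh infX).
  move=> U oU U0; apply/fprec_prec.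
  exact: fthinS (boundary_level_set _ _ hg _ _ _ cY n0) thin_translates _ oU U0.
Qed.
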